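(* For $i\in\{0,1,\dots,m\}$ let $q_i(y)=y^\top A_iy+2b_i^\top y+c_i$ with $A_i\in\mathbb{S}^{n-1}$, $b_i\in\mathbb{R}^{n-1}$, $c_i\in\mathbb{R}$. For $i\in\{1,\dots,m\}$ let $M_i=\begin{pmatrix}c_i & b_i^\top\\ b_i & A_i\end{pmatrix}$, $\mathcal{M}=\{M_1,\dots,M_m\}$, and $\mathcal{Y}=\{y\in\mathbb{R}^{n-1}:q_i(y)\ge0\ \forall i\in\{1,\dots,m\}\}$. Suppose there exists $\lambda^*\in\mathbb{R}^m_+$ such that $A_0-\sum_{i=1}^m\lambda^*_iA_i$ is positive semidefinite. If $\mathcal{S}(\mathcal{M})$ is rank-one generated, then the closed convex hull of $\mathrm{epi}=\{(y,t)\in\mathbb{R}^{n-1}\times\mathbb{R}: q_0(y)\le t,\ y\in\mathcal{Y}\}$ is $$\mathrm{clconv}(\mathrm{epi})=\mathrm{cl}\left(\left\{(y,t):\ \exists\,Y\succeq yy^\top,\ \langle A_0,Y\rangle+2\langle b_0,y\rangle+c_0\le t,\ \langle A_i,Y\rangle+2\langle b_i,y\rangle+c_i\ge0\ \forall i\in\{1,\dots,m\}\right\}\right).$$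
   Context: $\mathbb{S}^n$ denotes real symmetric $n\times n$ matrices with $\langle A,B\rangle=\mathrm{tr}(AB)$, $\mathbb{S}^n_+$ the PSD cone, $Y\succeq Z$ means $Y-Z$ is PSD, $\mathrm{cl}$ is closure and $\mathrm{clconv}$ closed convex hull. For $\mathcal{M}\subseteq\mathbb{S}^n$, $\mathcal{S}(\mathcal{M})=\{X\in\mathbb{S}^n_+:\langle M,X\rangle\ge0\ \forall M\in\mathcal{M}\}$. A closed convex cone $\mathcal{S}\subseteq\mathbb{S}^n_+$ is rank-one generated (ROG) if $\mathcal{S}=\mathrm{conv}(\mathcal{S}\cap\{xx^\top:x\in\mathbb{R}^n\})$. *)

From HB Require Import structures.
From mathcomp Require Import all_boot all_order all_algebra.
From mathcomp Require Import all_classical all_reals all_analysis.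
Set Implicit Arguments. Unset Strict Implicit. Unset Printing Implicit Defensive.
Import Order.TTheory GRing.Theory Num.Theory.
Import numFieldNormedType.Exports.
Local Open Scope classical_set_scope.
Local Open Scope ring_scope.

Definition psd {R : realType} {n : nat} (X : 'M[R]_n) : Prop :=
  X^T = X /\ forall x : 'cV[R]_n, 0 <= (x^T *m X *m x) 0 0.

Definition minner {R : realType} {n : nat} (A B : 'M[R]_n) : R := \tr (A *m B).

Definition SM {R : realType} {n m : nat} (M : 'I_m -> 'M[R]_n) : set 'M[R]_n :=
  [set X | psd X /\ forall i, 0 <= minner (M i) X].

Definition convhull {R : realType} {V : lmodType R} (E : set V) : set V :=
  [set x | exists (k : nat) (w : 'I_k -> R) (p : 'I_k -> V),
     (forall i, 0 <= w i) /\ \sum_i w i = 1 /\ (forall i, E (p i)) /\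
     x = \sum_i w i *: p i].

Definition ROG {R : realType} {n : nat} (S : set 'M[R]_n) : Prop :=
  S = convhull (S `&` [set X | exists x : 'cV[R]_n, X = x *m x^T]).

Definition quad {R : realType} {d : nat} (A : 'M[R]_d) (b : 'cV[R]_d) (c : R)
  (y : 'cV[R]_d) : R := (y^T *m A *m y) 0 0 + 2 * (b^T *m y) 0 0 + c.

Definition homog {R : realType} {d : nat} (A : 'M[R]_d) (b : 'cV[R]_d) (c : R)
  : 'M[R]_(1 + d) := block_mx (c%:M : 'M[R]_1) b^T b A.

From HB Require Import structures.
From mathcomp Require Import all_boot all_order all_algebra.
From mathcomp Require Import all_classical all_reals all_analysis.
From mathcomp Require Import ring lra.
Import Order.TTheory GRing.Theory Num.Theory.
Import numFieldNormedType.Exports.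
Local Open Scope classical_set_scope.
Local Open Scope ring_scope.

(* Lift a point (y, t) of the relaxation, with its matrix Y, to
   X = [[1, y^T]; [y, Y]] in S(M).  Rank-one generation writes
   X = sum_j w_j x_j x_j^T with x_j = (s_j, z_j) satisfying the homogenized
   constraints.  The components with s_j <> 0 dehomogenize to feasible points
   z_j / s_j, with weights w_j s_j^2 summing to 1 and averaging to y; those with
   s_j = 0 are recession directions, on which q_0 >= 0 because of lambda*, so
   dropping them only lowers the objective and the remaining slack goes into t.
   Conversely, the second-moment matrix of a convex combination dominates the
   outer product of its mean.  Hence conv(epi) equals the relaxation even
   before taking closures. *)

Section QuadraticForms.
Context {R : realType}.

Definition qform {n} (M : 'M[R]_n) (z : 'cV[R]_n) : R := (z^T *m M *m z) 0 0.

Lemma mulmx11 (P Q : 'M[R]_1) : (P *m Q) 0 0 = P 0 0 * Q 0 0.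
Proof. by rewrite mxE big_ord1. Qed.

Lemma dotmxC n (u v : 'cV[R]_n) : (u^T *m v) 0 0 = (v^T *m u) 0 0.
Proof. by rewrite -[u^T *m v]trmxK trmx_mul trmxK [LHS]mxE. Qed.

Lemma dotmx_sumZ n (u : 'cV[R]_n) k (w : 'I_k -> R) (v : 'I_k -> 'cV[R]_n) :
  (u^T *m \sum_j w j *: v j) 0 0 = \sum_j w j * (u^T *m v j) 0 0.
Proof.
by rewrite mulmx_sumr summxE; apply: eq_bigr => j _; rewrite -scalemxAr mxE.
Qed.

Lemma qformB n (M N : 'M[R]_n) z : qform (M - N) z = qform M z - qform N z.
Proof. by rewrite /qform mulmxBr mulmxBl !mxE. Qed.

Lemma qform_sumZ n k (w : 'I_k -> R) (M : 'I_k -> 'M[R]_n) z :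
  qform (\sum_j w j *: M j) z = \sum_j w j * qform (M j) z.
Proof.
rewrite /qform mulmx_sumr mulmx_suml summxE; apply: eq_bigr => j _.
by rewrite -scalemxAr -scalemxAl mxE.
Qed.

Lemma qform_outer n (y z : 'cV[R]_n) : qform (y *m y^T) z = (y^T *m z) 0 0 ^+ 2.
Proof. by rewrite /qform mulmxA -mulmxA mulmx11 dotmxC expr2. Qed.

Lemma minner_outer n (M : 'M[R]_n) (x : 'cV[R]_n) :
  minner M (x *m x^T) = qform M x.
Proof. by rewrite /minner mulmxA mxtrace_mulC mulmxA trace_mx11. Qed.

Lemma minner_sumZ n (M : 'M[R]_n) k (w : 'I_k -> R) (N : 'I_k -> 'M[R]_n) :
  minner M (\sum_j w j *: N j) = \sum_j w j * minner M (N j).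
Proof.
rewrite /minner mulmx_sumr raddf_sum; apply: eq_bigr => j _.
by rewrite /= -scalemxAr mxtraceZ.
Qed.

Lemma sqr_sum_le k (w a : 'I_k -> R) : (forall j, 0 <= w j) -> \sum_j w j = 1 ->
  (\sum_j w j * a j) ^+ 2 <= \sum_j w j * a j ^+ 2.
Proof.
move=> w_ge0 w_sum1; set M := \sum_j w j * a j.
have E : \sum_j w j * (a j - M) ^+ 2 =
    \sum_j w j * a j ^+ 2 - \sum_j 2 * M * (w j * a j) + \sum_j M ^+ 2 * w j.
  by rewrite -sumrB -big_split /=; apply: eq_bigr => j _; ring.
rewrite -!mulr_sumr -/M w_sum1 in E.
have : 0 <= \sum_j w j * (a j - M) ^+ 2.
  by apply: sumr_ge0 => j _; rewrite mulr_ge0 ?sqr_ge0.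
rewrite E; lra.
Qed.

Lemma psd_covariance n k (w : 'I_k -> R) (v : 'I_k -> 'cV[R]_n) :
  (forall j, 0 <= w j) -> \sum_j w j = 1 ->
  let mean := \sum_j w j *: v j in
  psd (\sum_j w j *: (v j *m (v j)^T) - mean *m mean^T).
Proof.
move=> w_ge0 w_sum1 mean; split.
  rewrite linearB linear_sum /= trmx_mul trmxK; congr (_ - _).
  by apply: eq_bigr => j _; rewrite linearZ /= trmx_mul trmxK.
move=> x; rewrite -/(qform _ x) qformB qform_sumZ qform_outer subr_ge0.
rewrite dotmxC dotmx_sumZ.
under [X in _ <= X]eq_bigr do rewrite qform_outer dotmxC.
exact: sqr_sum_le.
Qed.

Lemma qform_recession {m n} {A0 : 'M[R]_n} {A : 'I_m -> 'M[R]_n} {lam : 'I_m -> R} :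
  (forall i, 0 <= lam i) -> psd (A0 - \sum_i lam i *: A i) ->
  forall z, (forall i, 0 <= qform (A i) z) -> 0 <= qform A0 z.
Proof.
move=> lam_ge0 [_ psd_lam] z Az_ge0; move: (psd_lam z).
rewrite -/(qform _ z) qformB qform_sumZ subr_ge0; apply: le_trans.
by apply: sumr_ge0 => i _; rewrite mulr_ge0.
Qed.

End QuadraticForms.

Section Homogenization.
Context {R : realType} {d : nat}.
Implicit Types (A Y : 'M[R]_d) (b y z : 'cV[R]_d) (c s : R).

Definition hquad A b c s z : R :=
  qform A z + 2 * s * (b^T *m z) 0 0 + s ^+ 2 * c.

Lemma hquad1 A b c y : hquad A b c 1 y = quad A b c y.
Proof. by rewrite /hquad /quad expr1n mulr1 mul1r. Qed.

Lemma hquad0 A b c z : hquad A b c 0 z = qform A z.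
Proof. by rewrite /hquad expr0n /= !(mulr0, mul0r, addr0). Qed.

Lemma hquad_dehomog A b c s z :
  s != 0 -> hquad A b c s z = s ^+ 2 * quad A b c (s^-1 *: z).
Proof.
move=> s_neq0; rewrite /hquad /qform /quad linearZ /= [(s^-1 *: z)^T]linearZ /=.
rewrite -!scalemxAl -!scalemxAr !mxE.
by field.
Qed.

Lemma qform_homog A b c (x : 'cV[R]_(1 + d)) :
  qform (homog A b c) x = hquad A b c (usubmx x 0 0) (dsubmx x).
Proof.
rewrite /hquad /qform /homog -[in LHS](vsubmxK x) tr_col_mx mul_row_block.
rewrite mul_row_col !mulmxDl [usubmx x]mx11_scalar tr_scalar_mx.
set s := usubmx x 0 0; set z := dsubmx x.
rewrite !mul_scalar_mx !mul_mx_scalar -scalemxAl !mxE !eqxx !mulr1n.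
have -> : \sum_j z^T 0 j * b j 0 = \sum_j b^T 0 j * z j 0.
  by apply: eq_bigr => j _; rewrite !mxE mulrC.
ring.
Qed.

Lemma minner_homog A Y b y c :
  minner (homog A b c) (homog Y y 1) = minner A Y + 2 * (b^T *m y) 0 0 + c.
Proof.
rewrite /minner /homog mulmx_block mxtrace_block mulmx1 !mxtraceD !trace_mx11.
by rewrite mxtrace_mulC trace_mx11 [(y^T *m b) 0 0]dotmxC [c%:M 0 0]mxE mulr1n; ring.
Qed.

Lemma outer_homog (x : 'cV[R]_(1 + d)) :
  x *m x^T = homog (dsubmx x *m (dsubmx x)^T) (usubmx x 0 0 *: dsubmx x)
                   (usubmx x 0 0 ^+ 2).
Proof.
rewrite -[in LHS](vsubmxK x) tr_col_mx mul_col_row [usubmx x]mx11_scalar.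
rewrite tr_scalar_mx -scalar_mxM mul_mx_scalar mul_scalar_mx /homog linearZ /=.
by rewrite -expr2 !mxE.
Qed.

Lemma homog_sumZ k (w : 'I_k -> R) (A : 'I_k -> 'M[R]_d) (b : 'I_k -> 'cV[R]_d)
    (c : 'I_k -> R) :
  \sum_j w j *: homog (A j) (b j) (c j) =
  homog (\sum_j w j *: A j) (\sum_j w j *: b j) (\sum_j w j * c j).
Proof.
elim: k w A b c => [|k IHk] w A b c.
  by rewrite !big_ord0 /homog !raddf0 block_mx0.
rewrite !big_ord_recr /= IHk /homog scale_block_mx add_block_mx.
by rewrite linearD linearZ /= scale_scalar_mx raddfD.
Qed.

Lemma homog_inj A A' b b' c c' :
  homog A b c = homog A' b' c' -> [/\ A = A', b = b' & c = c'].
Proof.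
move=> /eq_block_mx [/(congr1 (fun M : 'M[R]_1 => M 0 0)) + _ -> ->].
by rewrite !mxE.
Qed.

Lemma psd_homog Y y : psd (Y - y *m y^T) -> psd (homog Y y 1).
Proof.
move=> [sym_Yy psd_Yy]; split.
  move: sym_Yy; rewrite linearB /= trmx_mul trmxK => /addIr YT.
  by rewrite /homog tr_block_mx YT trmxK tr_scalar_mx.
move=> x; rewrite -/(qform _ x) qform_homog /hquad.
have := psd_Yy (dsubmx x); rewrite -/(qform _ _) qformB qform_outer.
set s := usubmx x 0 0; set u := (y^T *m dsubmx x) 0 0.
by have := sqr_ge0 (s + u); nra.
Qed.

Lemma sum_hquad A b c k (w s : 'I_k -> R) (z : 'I_k -> 'cV[R]_d) :
  \sum_j w j * hquad A b c (s j) (z j) =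
  minner A (\sum_j w j *: (z j *m (z j)^T))
  + 2 * (b^T *m \sum_j w j *: (s j *: z j)) 0 0 + c * \sum_j w j * s j ^+ 2.
Proof.
rewrite minner_sumZ dotmx_sumZ !mulr_sumr -!big_split /=; apply: eq_bigr => j _.
by rewrite minner_outer -scalemxAr mxE /hquad; ring.
Qed.

End Homogenization.

Lemma sum_pair (R : numFieldType) (U : lmodType R) k (w : 'I_k -> R)
    (p : 'I_k -> U * R) :
  \sum_j w j *: p j = (\sum_j w j *: (p j).1, \sum_j w j * (p j).2).
Proof.
elim: k w p => [|k IHk] w p; first by rewrite !big_ord0.
by rewrite !big_ord_recr /= IHk.
Qed.

Section Epigraph.
Variables (R : realType) (d m : nat) (A0 : 'M[R]_d) (b0 : 'cV[R]_d) (c0 : R).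
Variables (A : 'I_m -> 'M[R]_d) (b : 'I_m -> 'cV[R]_d) (c : 'I_m -> R).

Definition epi : set ('cV[R]_d * R) :=
  [set p | quad A0 b0 c0 p.1 <= p.2 /\ forall i, 0 <= quad (A i) (b i) (c i) p.1].

Definition relaxation : set ('cV[R]_d * R) :=
  [set p | exists Y : 'M[R]_d,
    psd (Y - p.1 *m p.1^T) /\
    minner A0 Y + 2 * (b0^T *m p.1) 0 0 + c0 <= p.2 /\
    forall i, 0 <= minner (A i) Y + 2 * ((b i)^T *m p.1) 0 0 + c i].

Lemma convhull_epi_sub_relaxation : convhull epi `<=` relaxation.
Proof.
move=> _ [k [w [p [w_ge0 [w_sum1 [p_epi ->]]]]]]; rewrite sum_pair /=.
pose Y := \sum_j w j *: ((p j).1 *m (p j).1^T).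
have moment M v c' :
    minner M Y + 2 * (v^T *m \sum_j w j *: (p j).1) 0 0 + c' =
    \sum_j w j * quad M v c' (p j).1.
  under [RHS]eq_bigr do rewrite -hquad1.
  rewrite sum_hquad.
  congr (_ + 2 * (_ *m _) 0 0 + _); first by apply: eq_bigr => j _; rewrite scale1r.
  by under eq_bigr do rewrite expr1n mulr1; rewrite w_sum1 mulr1.
exists Y; split; first exact: psd_covariance.
split=> [|i]; rewrite moment.
  by apply: ler_sum => j _; rewrite ler_wpM2l // (p_epi j).1.
by apply: sumr_ge0 => j _; rewrite mulr_ge0 // (p_epi j).2.
Qed.

Lemma homog_rank_one_decomposition (Y : 'M[R]_d) (y : 'cV[R]_d) :
  convhull (SM (fun i => homog (A i) (b i) (c i)) `&`
            [set X | exists x : 'cV[R]_(1 + d), X = x *m x^T]) (homog Y y 1) ->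
  exists k (w s : 'I_k -> R) (z : 'I_k -> 'cV[R]_d),
    [/\ forall j, 0 <= w j, Y = \sum_j w j *: (z j *m (z j)^T),
        y = \sum_j w j *: (s j *: z j), \sum_j w j * s j ^+ 2 = 1
      & forall i j, 0 <= hquad (A i) (b i) (c i) (s j) (z j)].
Proof.
move=> [k [w [P [w_ge0 [_ [P_rank1 P_sum]]]]]].
have [x Px] : exists x : 'I_k -> 'cV[R]_(1 + d), forall j, P j = x j *m (x j)^T.
  apply: (@fin_all_exists _ _ (fun j x => P j = x *m x^T)) => j.
  by have [_ [x ->]] := P_rank1 j; exists x.
exists k, w, (fun j => usubmx (x j) 0 0), (fun j => dsubmx (x j)).
have : homog Y y 1 = homog (\sum_j w j *: (dsubmx (x j) *m (dsubmx (x j))^T))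
    (\sum_j w j *: (usubmx (x j) 0 0 *: dsubmx (x j)))
    (\sum_j w j * usubmx (x j) 0 0 ^+ 2).
  by rewrite P_sum -homog_sumZ; apply: eq_bigr => j _; rewrite Px outer_homog.
move=> /homog_inj [-> -> /esym sum1]; split=> // i j.
have [[_ Pj_feas] _] := P_rank1 j.
by have := Pj_feas i; rewrite Px minner_outer qform_homog.
Qed.

Lemma convhull_epi_dehomog k (w s : 'I_k -> R) (z : 'I_k -> 'cV[R]_d) t :
  (forall j, 0 <= w j) -> \sum_j w j * s j ^+ 2 = 1 ->
  (forall i j, 0 <= hquad (A i) (b i) (c i) (s j) (z j)) ->
  (forall j, s j = 0 -> 0 <= qform A0 (z j)) ->
  \sum_j w j * hquad A0 b0 c0 (s j) (z j) <= t ->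
  convhull epi (\sum_j w j *: (s j *: z j), t).
Proof.
move=> w_ge0 ws_sum1 z_feas z_rec obj_le.
have [j0 sj0_neq0] : exists j0, s j0 != 0.
  case: (pickP (fun j => s j != 0)) => [j0 ?| s_eq0]; first by exists j0.
  suff : \sum_j w j * s j ^+ 2 = 0 by rewrite ws_sum1 => /eqP; rewrite oner_eq0.
  apply: big1 => j _.
  by move/negbFE/eqP: (s_eq0 j) => ->; rewrite expr0n mulr0.
(* Components with s j = 0 get weight 0 and are parked at a feasible point. *)
pose rep j := if s j != 0 then j else j0.
have s_rep_neq0 j : s (rep j) != 0 by rewrite /rep; case: ifP.
pose yp j := (s (rep j))^-1 *: z (rep j).
pose mu j := w j * s j ^+ 2.
have yp_feas i j : 0 <= quad (A i) (b i) (c i) (yp j).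
  have s2_gt0 : 0 < s (rep j) ^+ 2 by rewrite exprn_even_gt0 //= s_rep_neq0 orbT.
  by rewrite -(pmulr_rge0 _ s2_gt0) -hquad_dehomog.
have mu_q0_le j : mu j * quad A0 b0 c0 (yp j) <= w j * hquad A0 b0 c0 (s j) (z j).
  rewrite /mu /yp /rep; case: ifPn => [sj_neq0 | /negPn/eqP sj0].
    by rewrite -mulrA -hquad_dehomog.
  by rewrite sj0 hquad0 expr0n /= mulr0 mul0r mulr_ge0 ?z_rec.
have mu_mean : \sum_j mu j *: yp j = \sum_j w j *: (s j *: z j).
  apply: eq_bigr => j _; rewrite /mu /yp /rep; case: ifPn => [sj_neq0 | /negPn/eqP ->].
    by rewrite !scalerA; congr (_ *: _); field.
  by rewrite expr0n /= mulr0 !scale0r scaler0.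
pose slack := t - \sum_j mu j * quad A0 b0 c0 (yp j).
have slack_ge0 : 0 <= slack.
  by rewrite subr_ge0 (le_trans _ obj_le) // ler_sum.
exists k, mu, (fun j => (yp j, quad A0 b0 c0 (yp j) + slack)).
split=> [j|]; first by rewrite mulr_ge0 ?sqr_ge0.
split=> //; split=> [j|]; first by split=> //=; rewrite lerDl.
rewrite sum_pair /= mu_mean; congr pair.
under eq_bigr do rewrite mulrDr.
by rewrite big_split /= -mulr_suml ws_sum1 mul1r /slack addrC subrK.
Qed.

Lemma relaxation_sub_convhull_epi (lam : 'I_m -> R) :
  (forall i, 0 <= lam i) -> psd (A0 - \sum_i lam i *: A i) ->
  ROG (SM (fun i => homog (A i) (b i) (c i))) ->
  relaxation `<=` convhull epi.
Proof.
move=> lam_ge0 psd_lam rog [y t] [Y [psd_Y [obj con]]].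
have : SM (fun i => homog (A i) (b i) (c i)) (homog Y y 1).
  by split=> [|i]; [exact: psd_homog psd_Y | rewrite minner_homog; exact: con].
rewrite rog => /homog_rank_one_decomposition[k [w [s [z [w_ge0 eY ey ws_sum1 z_feas]]]]].
rewrite /= ey; apply: convhull_epi_dehomog => // [j sj0|].
  apply: (qform_recession lam_ge0 psd_lam) => i.
  by have := z_feas i j; rewrite sj0 hquad0.
by rewrite sum_hquad -eY -ey ws_sum1 mulr1; exact: obj.
Qed.

End Epigraph.

Theorem corollary5p11 (R : realType) (d m : nat)
  (A0 : 'M[R]_d) (b0 : 'cV[R]_d) (c0 : R)
  (A : 'I_m -> 'M[R]_d) (b : 'I_m -> 'cV[R]_d) (c : 'I_m -> R) :
  A0^T = A0 -> (forall i, (A i)^T = A i) ->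
  (exists lam : 'I_m -> R, (forall i, 0 <= lam i) /\
      psd (A0 - \sum_i lam i *: A i)) ->
  ROG (SM (fun i => homog (A i) (b i) (c i))) ->
  closure (convhull [set p : 'cV[R]_d * R |
      quad A0 b0 c0 p.1 <= p.2 /\ forall i, 0 <= quad (A i) (b i) (c i) p.1] : set ('cV[R]_d * R))
  = closure [set p : 'cV[R]_d * R | exists Y : 'M[R]_d,
      psd (Y - p.1 *m p.1^T) /\
      minner A0 Y + 2 * (b0^T *m p.1) 0 0 + c0 <= p.2 /\
      forall i, 0 <= minner (A i) Y + 2 * ((b i)^T *m p.1) 0 0 + c i].
Proof.
move=> _ _ [lam [lam_ge0 psd_lam]] rog.
congr closure; apply/seteqP; split.
  exact: convhull_epi_sub_relaxation.
exact: relaxation_sub_convhull_epi psd_lam rog.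
Qed.
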